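(* Let $G=(V,E)$ be a graph, $v\in V$, and $S_v$ the partial star product of $v$. Then: (1) if $e,f\in E_v$ and $(e,f)\in\mathfrak d_v^*$, there is no square in $S_v$ spanned by $e$ and $f$; (2) every square ($4$-cycle) in $S_v$ contains two edges of $E_v$ and two edges of $F_v$, and every edge $f\in F_v$ is the opposite edge of some primal edge $e\in E_v$ in a chordless square of $S_v$; (3) every non-primal vertex of $S_v$ is the unique top vertex of some square spanned by two edges $e,e'\in E_v$ (i.e. a top vertex $x$ of a square $v,u,x,w$ such that $u,w$ are the only common neighbours of $v$ and $x$).
   Context: All graphs are finite, simple and undirected. For a graph $G=(V,E)$ and $v\in V$, $E_v$ denotes the set of edges incident to $v$. For two distinct adjacent edges $e=(v,u)$, $f=(v,w)$, a square spanned by $e$ and $f$ is a $4$-cycle $v,u,x,w,v$ with $x\notin\{v,u,w\}$; $x$ is its top vertex. The square is chordless if neither $(u,w)$ nor $(v,x)$ is an edge of $G$. In a chordless square $v,u,x,w$, $(x,w)$ is the opposite edge of $(v,u)$ and $(x,u)$ is the opposite edge of $(v,w)$ (and vice versa). The relation $\delta(G)\subseteq E\times E$: $(e,f)\in\delta(G)$ iff (i) $e,f$ are distinct adjacent edges and it is not the case that $e$ and $f$ span exactly one square and that square is chordless; or (ii) $e,f$ are opposite edges of a chordless square; or (iii) $e=f$. Define $\mathfrak d_v=((E_v\times E)\cup(E\times E_v))\cap\delta(G)$ and $\mathfrak d_v^*$ the finest equivalence relation on $E$ containing $\mathfrak d_v$. Let $F_v\subseteq E\setminus E_v$ be the set of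 edges that are the edges not incident to $v$ of some chordless square spanned by two edges $e,e'\in E_v$ with $(e,e')\notin\mathfrak d_v^*$. The partial star product $S_v$ is the subgraph of $G$ with edge set $E_v\cup F_v$ and vertex set the endpoints of these edges; neighbours of $v$ are primal vertices, and the other vertices of $S_v$ distinct from $v$ are non-primal vertices. *)

(* A simple graph is a symmetric irreflexive relation [adj]
   on a finite type [T]; an edge is a 2-element vertex set [set x; y] with
   [adj x y]. *)
From mathcomp Require Import all_boot.
Set Implicit Arguments. Unset Strict Implicit. Unset Printing Implicit Defensive.

Section PartialStar.
Variable T : finType.
Variable adj : rel T.

Definition is_edge (e : {set T}) : bool :=
  [exists x, exists y, adj x y && (e == [set x; y])].
Definition Eset : {set {set T}} := [set e | is_edge e].
Definition Eat (v : T) : {set {set T}} := [set e in Eset | v \in e].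

Definition square (r : rel T) (a b c d : T) : bool :=
  [&& r a b, r b c, r c d, r d a, a != c & b != d].

Definition chordless (v u x w : T) : bool :=
  [&& square adj v u x w, ~~ adj u w & ~~ adj v x].

Definition adj_edges (e f : {set T}) : bool :=
  [&& e \in Eset, f \in Eset, e != f & #|e :&: f| == 1].

(* the squares (v,u,x,w) spanned by e = (v,u) and f = (v,w) *)
Definition spanned (e f : {set T}) : {set T * T * T * T} :=
  [set q : T * T * T * T |
     [&& e == [set q.1.1.1; q.1.1.2], f == [set q.1.1.1; q.2] &
         square adj q.1.1.1 q.1.1.2 q.1.2 q.2]].

Definition one_chordless_square (e f : {set T}) : bool :=
  (#|spanned e f| == 1) &&
  [forall q in spanned e f, chordless q.1.1.1 q.1.1.2 q.1.2 q.2].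

Definition opposite (a b : {set T}) : bool :=
  [exists v, exists u, exists x, exists w,
     chordless v u x w &&
     [|| (a == [set v; u]) && (b == [set x; w]),
         (a == [set x; w]) && (b == [set v; u]),
         (a == [set v; w]) && (b == [set x; u]) |
         (a == [set x; u]) && (b == [set v; w])]].

Definition delta (e f : {set T}) : bool :=
  [&& e \in Eset, f \in Eset &
      [|| adj_edges e f && ~~ one_chordless_square e f, opposite e f | e == f]].

Definition dv (v : T) (e f : {set T}) : bool :=
  delta e f && ((e \in Eat v) || (f \in Eat v)).

(* d_v^* : finest equivalence relation on E containing d_v *)
Definition dstar (v : T) (e f : {set T}) : bool :=
  [&& e \in Eset, f \in Eset &
      connect [rel a b | dv v a b || dv v b a] e f].

Definition Fv (v : T) : {set {set T}} :=
  [set f in Eset | (v \notin f) &&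
     [exists u, exists x, exists w,
        [&& ~~ dstar v [set v; u] [set v; w], chordless v u x w &
            (f == [set u; x]) || (f == [set x; w])]]].

Definition SvE (v : T) : {set {set T}} := Eat v :|: Fv v.
Definition adjS (v : T) : rel T := fun a b => [set a; b] \in SvE v.
Definition SvV (v : T) : {set T} := [set x | [exists e in SvE v, x \in e]].

Definition nonprimal (v x : T) : bool := [&& x \in SvV v, x != v & ~~ adj v x].

End PartialStar.

(* The heart of the argument is one lemma ([chordless_common_neighbours]):
   if v,u,x,w is a chordless square whose primal edges (v,u), (v,w) are NOT
   d_v^*-related, then u and w are the only common neighbours of v and x.
   Indeed a third common neighbour y yields two squares u,v,w,x and u,v,y,x
   spanned by (u,v), (u,x), so (v,u) delta (u,x); and (u,x) is opposite to
   (v,w), so (v,u) d_v^* (v,w).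

   Consequently every edge of F_v has exactly one primal endpoint and lies in
   such a square, and this square is a square of S_v.  Part (3) and part (2b)
   read off these squares; part (1) follows because a square of S_v at v
   contains an F_v-edge, whose defining square must be the given one; part
   (2a) follows once we know that every square of S_v passes through v: a
   square avoiding v would consist of F_v-edges with alternating primal
   endpoints, and the lemma would again force two primal edges to be related. *)
From mathcomp Require Import all_boot.
Set Implicit Arguments. Unset Strict Implicit. Unset Printing Implicit Defensive.

Section FiniteSets.
Variable T : finType.

Lemma set2_inj (a b c d : T) : [set a; b] = [set c; d] ->
  (a = c /\ b = d) \/ (a = d /\ b = c).
Proof.
move=> E.
have ha : a \in [set c; d] by rewrite -E set21.
have hb : b \in [set c; d] by rewrite -E set22.
have hc : c \in [set a; b] by rewrite E set21.
have hd : d \in [set a; b] by rewrite E set22.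
move: ha hb hc hd; rewrite !inE.
by case/orP=> /eqP Ea; case/orP=> /eqP Eb; case/orP=> /eqP Ec;
  case/orP=> /eqP Ed; subst; auto.
Qed.

Lemma set4_rot (x1 x2 x3 x4 : T) :
  [set x1; x2; x3; x4] = [set x2; x3; x4; x1].
Proof.
apply/setP=> z; rewrite !inE.
by case: (z == x1); case: (z == x2); case: (z == x3); case: (z == x4).
Qed.

Lemma card_set4I (A : {set T}) (x1 x2 x3 x4 : T) :
  x1 \in A -> x4 \in A -> x2 \notin A -> x3 \notin A -> x1 != x4 ->
  #|[set x1; x2; x3; x4] :&: A| = 2.
Proof.
move=> h1 h4 h2 h3 n14.
have -> : [set x1; x2; x3; x4] :&: A = [set x1; x4].
  apply/setP=> z; rewrite !inE.
  case: (eqVneq z x1) => [->|_]; first by rewrite h1.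
  case: (eqVneq z x4) => [->|_]; first by rewrite h4 !orbT.
  case: (eqVneq z x2) => [->|_]; first by rewrite (negbTE h2).
  by case: (eqVneq z x3) => [->|_]; first by rewrite (negbTE h3).
by rewrite cards2 n14.
Qed.

Lemma square_rot (r : rel T) a b c d : square r a b c d -> square r b c d a.
Proof.
by case/and5P=> h1 h2 h3 h4 /andP [h5 h6]; rewrite /square h1 h2 h3 h4 h6 eq_sym h5.
Qed.

End FiniteSets.

Section PartialStarProduct.
Variable T : finType.
Variable adj : rel T.
Hypothesis adj_sym : symmetric adj.
Hypothesis adj_irr : irreflexive adj.

Lemma adj_neq (a b : T) : adj a b -> a != b.
Proof. by apply: contraTneq => ->; rewrite adj_irr. Qed.

Lemma edgeP (a b : T) : ([set a; b] \in Eset adj) = adj a b.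
Proof.
rewrite inE /is_edge; apply/idP/idP.
  case/existsP=> p /existsP [q /andP [hpq /eqP E]].
  by case: (set2_inj E) => [[-> ->]|[-> ->]] //; rewrite adj_sym.
by move=> h; apply/existsP; exists a; apply/existsP; exists b; rewrite h eqxx.
Qed.

Lemma EatP (v a b : T) :
  ([set a; b] \in Eat adj v) = adj a b && ((v == a) || (v == b)).
Proof. by rewrite inE edgeP !inE. Qed.

Lemma Eat_edge (v u : T) : adj v u -> [set v; u] \in Eat adj v.
Proof. by move=> h; rewrite EatP h eqxx. Qed.

Lemma Eat_endpoint v e x : e \in Eat adj v -> x \in e -> x = v \/ adj v x.
Proof.
rewrite inE => /andP [/[!inE] /existsP [p /existsP [q /andP [apq /eqP ->]]]].
by rewrite !inE => /orP [] /eqP -> /orP [] /eqP ->; auto; rewrite adj_sym; auto.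
Qed.

Lemma adjS_adj v a b : adjS adj v a b -> adj a b.
Proof. by rewrite -edgeP /adjS /SvE !inE => /orP [/andP[]|/andP[]]. Qed.

Lemma SvE_Fv v f : f \in SvE adj v -> f \notin Eat adj v -> f \in Fv adj v.
Proof. by rewrite /SvE in_setU => /orP [->|]. Qed.

Lemma Fv_notv v (f : {set T}) : v \in f -> f \notin Fv adj v.
Proof. by move=> h; rewrite inE h andbF. Qed.

Lemma chordless_sym v u x w : chordless adj v u x w -> chordless adj v w x u.
Proof.
rewrite /chordless /square => /and3P [/and5P [h1 h2 h3 h4 /andP [h5 h6]] h7 h8].
by rewrite (adj_sym v w) h4 (adj_sym w x) h3 (adj_sym x u) h2 (adj_sym u v) h1 h5
  eq_sym h6 (adj_sym w u) h7 h8.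
Qed.

Lemma dstar_sym v e f : dstar adj v e f -> dstar adj v f e.
Proof.
case/and3P=> he hf hc; rewrite /dstar hf he /=.
by rewrite sym_connect_sym // => a b /=; rewrite orbC.
Qed.

Lemma dstar_trans v e f g :
  dstar adj v e f -> dstar adj v f g -> dstar adj v e g.
Proof.
case/and3P=> he _ h1; case/and3P=> _ hg h2; rewrite /dstar he hg /=.
exact: connect_trans h1 h2.
Qed.

Lemma dv_dstar v e f : dv adj v e f -> dstar adj v e f.
Proof.
move=> h; have := h; rewrite /dv /delta => /andP [/and3P [he hf _] _].
by rewrite /dstar he hf /=; apply: connect1; rewrite /= h.
Qed.

Lemma delta_two_squares (c p p' y y' : T) :
  square adj c p y p' -> square adj c p y' p' -> y != y' ->
  delta adj [set c; p] [set c; p'].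
Proof.
move=> s1 s2 yy'.
move: (s1) => /and5P [h1 _ _ h4 /andP [_ pp']].
have cp' : c != p' by rewrite eq_sym adj_neq.
rewrite /delta !edgeP h1 adj_sym h4 /=; apply/orP; left; apply/andP; split.
  rewrite /adj_edges !edgeP h1 adj_sym h4 /=; apply/andP; split.
    by apply/eqP => /set2_inj [[_ /eqP]|[/eqP]];
      rewrite ?(negbTE pp') ?(negbTE cp').
  have -> : [set c; p] :&: [set c; p'] = [set c].
    apply/setP=> z; rewrite !inE; case: (eqVneq z c) => //= _.
    by case: (eqVneq z p) => //= ->; rewrite (negbTE pp').
  by rewrite cards1.
rewrite /one_chordless_square negb_and; apply/orP; left.
suff : 1 < #|spanned adj [set c; p] [set c; p']| by case: #|_| => [|[|]].
apply/card_gt1P; exists (c, p, y, p'), (c, p, y', p'); rewrite !inE /= !eqxx s1 s2.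
by split => //; apply: contraNneq yy' => -[->].
Qed.

Lemma chordless_common_neighbours v u x w y :
  chordless adj v u x w -> ~~ dstar adj v [set v; u] [set v; w] ->
  adj v y -> adj y x -> y = u \/ y = w.
Proof.
move=> ch nd hvy hyx.
case: (eqVneq y u) => [->|yu]; first by left.
case: (eqVneq y w) => [->|yw]; first by right.
exfalso; move/negP: nd; apply.
move: (ch) => /and3P [/and5P [h1 h2 h3 h4 /andP [h5 h6]] _ _].
have s_w : square adj u v w x.
  by rewrite /square (adj_sym u v) h1 (adj_sym v w) h4 (adj_sym w x) h3
    (adj_sym x u) h2 h6 h5.
have s_y : square adj u v y x.
  by rewrite /square (adj_sym u v) h1 hvy hyx (adj_sym x u) h2 eq_sym yu h5.
have vu_ux : dv adj v [set v; u] [set u; x].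
  rewrite /dv Eat_edge // andbT setUC.
  by apply: delta_two_squares s_w s_y _; rewrite eq_sym.
have ux_vw : dv adj v [set u; x] [set v; w].
  have opp : opposite adj [set u; x] [set v; w].
    apply/existsP; exists v; apply/existsP; exists u; apply/existsP; exists x.
    by apply/existsP; exists w; rewrite ch setUC !eqxx !orbT.
  by rewrite /dv /delta !edgeP h2 adj_sym h4 opp Eat_edge ?orbT // adj_sym.
exact: dstar_trans (dv_dstar vu_ux) (dv_dstar ux_vw).
Qed.

Lemma Fv_intro v u x w :
  chordless adj v u x w -> ~~ dstar adj v [set v; u] [set v; w] ->
  [set u; x] \in Fv adj v /\ [set x; w] \in Fv adj v.
Proof.
move=> ch nd; move: (ch) => /and3P [/and5P [h1 h2 h3 h4 /andP [h5 _]] _ _].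
have vu := adj_neq h1; have vw : v != w by rewrite eq_sym adj_neq.
split; rewrite inE edgeP ?h2 ?h3 !inE ?(negbTE vu) ?(negbTE h5) ?(negbTE vw) /=;
  apply/existsP; exists u; apply/existsP; exists x; apply/existsP; exists w;
  by rewrite nd ch !eqxx ?orbT.
Qed.

Lemma Fv_elim v f : f \in Fv adj v -> exists u x w,
  [/\ ~~ dstar adj v [set v; u] [set v; w], chordless adj v u x w &
      f = [set u; x]].
Proof.
rewrite inE => /and3P [_ _ /existsP [u /existsP [x /existsP [w]]]].
case/and3P=> nd ch /orP [/eqP ->|/eqP ->]; first by exists u, x, w.
exists w, x, u; split; last by rewrite setUC.
- by apply: contra nd; apply: dstar_sym.
- exact: chordless_sym.
Qed.

Lemma Fv_primal v u x : [set u; x] \in Fv adj v -> adj v u ->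
  exists w, ~~ dstar adj v [set v; u] [set v; w] /\ chordless adj v u x w.
Proof.
move=> /Fv_elim [u' [x' [w [nd ch E]]]] hvu.
move: (ch) => /and3P [_ _ nvx'].
case: (set2_inj E) => [[-> ->]|[E1 E2]]; first by exists w.
by subst; rewrite hvu in nvx'.
Qed.

Lemma Fv_one_primal v p q : [set p; q] \in Fv adj v -> adj v p != adj v q.
Proof.
move=> /Fv_elim [u [x [w [_ /and3P [/and5P [h1 _ _ _ _] _ h8] E]]]].
by case: (set2_inj E) => [[-> ->]|[-> ->]]; rewrite h1 (negbTE h8).
Qed.

Lemma chordless_square_Sv v u x w :
  chordless adj v u x w -> ~~ dstar adj v [set v; u] [set v; w] ->
  square (adjS adj v) v u x w.
Proof.
move=> ch nd; have [Fux Fxw] := Fv_intro ch nd.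
move: (ch) => /and3P [/and5P [h1 _ _ h4 /andP [h5 h6]] _ _].
rewrite /square /adjS /SvE !in_setU Fux Fxw !orbT EatP h1 eqxx /=.
by rewrite EatP h4 eqxx orbT h5 h6.
Qed.

Lemma no_square_primal_opposite v p1 q1 p2 q2 :
  square (adjS adj v) p1 q1 p2 q2 -> adj v p1 -> adj v p2 ->
  v != q1 -> v != q2 -> False.
Proof.
case/and5P=> h1 h2 h3 h4 /andP [p12 q12] a1 a2 nq1 nq2.
have F1 : [set p1; q1] \in Fv adj v.
  by apply: (SvE_Fv h1); rewrite EatP (negbTE (adj_neq a1)) (negbTE nq1) andbF.
case: (Fv_primal F1 a1) => w [nd ch].
have q1p2 : adj p2 q1 by rewrite adj_sym (adjS_adj h2).
case: (chordless_common_neighbours ch nd a2 q1p2) => [E|Ew].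
  by rewrite E eqxx in p12.
subst w; move: (ch) => /and3P [s1 _ _].
have s2 : square adj v p1 q2 p2.
  by rewrite /square a1 adj_sym (adjS_adj h4) adj_sym (adjS_adj h3) adj_sym a2
    nq2 p12.
have : dv adj v [set v; p1] [set v; p2].
  by rewrite /dv (delta_two_squares s1 s2 q12) Eat_edge.
by move/dv_dstar; apply/negP.
Qed.

(* Every square of S_v passes through v: otherwise its four edges lie in F_v,
   their primal endpoints alternate, and two of them are opposite. *)
Lemma square_Sv_meets_v v a b c d : square (adjS adj v) a b c d ->
  [|| v == a, v == b, v == c | v == d].
Proof.
move=> sq; apply/negPn/negP; rewrite !negb_or => /and4P [na nb nc nd].
move: (sq) => /and4P [h1 h2 h3 /andP [h4 _]].
have notEat p q : v != p -> v != q -> [set p; q] \notin Eat adj v.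
  by move=> np nq; rewrite EatP (negbTE np) (negbTE nq) andbF.
have x1 := Fv_one_primal (SvE_Fv h1 (notEat _ _ na nb)).
have x2 := Fv_one_primal (SvE_Fv h2 (notEat _ _ nb nc)).
have x4 := Fv_one_primal (SvE_Fv h4 (notEat _ _ nd na)).
case Ha: (adj v a) x1 x4 => x1 x4.
  have Hb : adj v b = false by move: x1; case: (adj v b).
  have Hc : adj v c by move: x2; rewrite Hb; case: (adj v c).
  exact: no_square_primal_opposite sq Ha Hc nb nd.
have Hb : adj v b by move: x1; case: (adj v b).
have Hd : adj v d by move: x4; case: (adj v d).
exact: no_square_primal_opposite (square_rot sq) Hb Hd nc na.
Qed.

Lemma square_Sv_at_v v b c d : square (adjS adj v) v b c d ->
  #|[set [set v; b]; [set b; c]; [set c; d]; [set d; v]] :&: Eat adj v| = 2 /\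
  #|[set [set v; b]; [set b; c]; [set c; d]; [set d; v]] :&: Fv adj v| = 2.
Proof.
case/and5P=> h1 h2 h3 h4 /andP [vc bd].
have a1 := adjS_adj h1; have a4 := adjS_adj h4.
have vb := adj_neq a1; have vd : v != d by rewrite eq_sym adj_neq.
have e1 : [set v; b] \in Eat adj v by rewrite EatP a1 eqxx.
have e4 : [set d; v] \in Eat adj v by rewrite EatP a4 eqxx orbT.
have e2 : [set b; c] \notin Eat adj v by rewrite EatP (negbTE vb) (negbTE vc) andbF.
have e3 : [set c; d] \notin Eat adj v by rewrite EatP (negbTE vd) (negbTE vc) andbF.
have f2 : [set b; c] \in Fv adj v by apply: (SvE_Fv h2).
have f3 : [set c; d] \in Fv adj v by apply: (SvE_Fv h3).
have f1 : [set v; b] \notin Fv adj v by apply: Fv_notv; rewrite !inE eqxx.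
have f4 : [set d; v] \notin Fv adj v by apply: Fv_notv; rewrite !inE eqxx orbT.
split.
  apply: card_set4I => //; apply/eqP => /set2_inj [[E _]|[_ E]].
    by rewrite E eqxx in vd.
  by rewrite E eqxx in bd.
rewrite set4_rot set4_rot; apply: card_set4I => //.
apply/eqP => /set2_inj [[E1 E2]|[_ E]].
  by rewrite E2 -E1 eqxx in bd.
by rewrite E eqxx in bd.
Qed.

Lemma dstar_no_square_Sv v u x w :
  adj v u -> adj v w -> dstar adj v [set v; u] [set v; w] ->
  ~~ square (adjS adj v) v u x w.
Proof.
move=> avu avw hd; apply/negP => /and5P [_ h2 h3 _ /andP [vx uw]].
have Fux : [set u; x] \in Fv adj v.
  by apply: (SvE_Fv h2); rewrite EatP (negbTE (adj_neq avu)) (negbTE vx) andbF.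
case: (Fv_primal Fux avu) => w' [nd ch].
have awx : adj w x by rewrite adj_sym (adjS_adj h3).
case: (chordless_common_neighbours ch nd avw awx) => [E|E].
  by rewrite E eqxx in uw.
by subst w'; rewrite hd in nd.
Qed.

Lemma square_Sv_edges v a b c d : square (adjS adj v) a b c d ->
  #|[set [set a; b]; [set b; c]; [set c; d]; [set d; a]] :&: Eat adj v| = 2 /\
  #|[set [set a; b]; [set b; c]; [set c; d]; [set d; a]] :&: Fv adj v| = 2.
Proof.
move=> sq; have sq2 := square_rot sq; have sq3 := square_rot sq2.
case/or4P: (square_Sv_meets_v sq) => /eqP E; subst.
- exact: square_Sv_at_v sq.
- by rewrite set4_rot; apply: square_Sv_at_v sq2.
- by rewrite set4_rot set4_rot; apply: square_Sv_at_v sq3.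
- by rewrite set4_rot set4_rot set4_rot; apply: square_Sv_at_v (square_rot sq3).
Qed.

Lemma Fv_opposite_primal v f : f \in Fv adj v ->
  exists e, e \in Eat adj v /\ exists a b c d,
    [/\ chordless adj a b c d, square (adjS adj v) a b c d,
        e = [set a; b] & f = [set c; d]].
Proof.
move=> /Fv_elim [u [x [w [nd ch ->]]]].
have ch' := chordless_sym ch.
have nd' : ~~ dstar adj v [set v; w] [set v; u] by apply: contra nd; apply: dstar_sym.
move: (ch) => /and3P [/and5P [_ _ _ h4 _] _ _].
exists [set v; w]; split; first by rewrite Eat_edge // adj_sym.
by exists v, w, x, u; split; rewrite ?chordless_square_Sv // setUC.
Qed.

Lemma nonprimal_unique_top v x : nonprimal adj v x ->
  exists u w, square (adjS adj v) v u x w /\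
    (forall y, adj v y -> adj y x -> y = u \/ y = w).
Proof.
case/and3P=> hS xv nvx.
move: hS; rewrite inE => /existsP [e /andP [heS hxe]].
have eF : e \in Fv adj v.
  apply: (SvE_Fv heS); apply: contraNN nvx => heE.
  by case: (Eat_endpoint heE hxe) => // Exv; rewrite Exv eqxx in xv.
case: (Fv_elim eF) => u [x' [w [nd ch Ee]]].
move: (ch) => /and3P [/and5P [h1 _ _ _ _] _ _].
move: hxe; rewrite Ee !inE => /orP [] /eqP Ex; first by rewrite Ex h1 in nvx.
subst x'; exists u, w; split; first exact: chordless_square_Sv.
by move=> y; apply: chordless_common_neighbours.
Qed.

End PartialStarProduct.

Theorem corollary3p3 (T : finType) (adj : rel T)
  (adj_sym : symmetric adj) (adj_irr : irreflexive adj) (v : T) :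
  (* (1) *)
  (forall e f : {set T}, e \in Eat adj v -> f \in Eat adj v ->
     dstar adj v e f ->
     forall u x w : T, e = [set v; u] -> f = [set v; w] ->
       ~~ square (adjS adj v) v u x w)
  /\
  (* (2a) every 4-cycle of S_v has two edges in E_v and two in F_v *)
  (forall a b c d : T, square (adjS adj v) a b c d ->
     #|[set [set a; b]; [set b; c]; [set c; d]; [set d; a]] :&: Eat adj v| = 2
     /\ #|[set [set a; b]; [set b; c]; [set c; d]; [set d; a]] :&: Fv adj v| = 2)
  /\
  (* (2b) every f in F_v is opposite to a primal edge in a chordless square of S_v *)
  (forall f : {set T}, f \in Fv adj v ->
     exists e : {set T}, e \in Eat adj v /\
       exists a b c d : T,
         [/\ chordless adj a b c d, square (adjS adj v) a b c d,
             e = [set a; b] & f = [set c; d]])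
  /\
  (* (3) every non-primal vertex is the unique top vertex of a square at v *)
  (forall x : T, nonprimal adj v x ->
     exists u w : T, square (adjS adj v) v u x w /\
       (forall y : T, adj v y -> adj y x -> y = u \/ y = w)).
Proof.
split.
  move=> e f he hf hd u x w Ee Ef; subst e f.
  move: he hf; rewrite !(EatP adj_sym) => /andP [avu _] /andP [avw _].
  exact: dstar_no_square_Sv.
split; first exact: square_Sv_edges.
split; first exact: Fv_opposite_primal.
exact: nonprimal_unique_top.
Qed.
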